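(* Let $R$ be a commutative ring and $S$ a finite multiplicative subset of $R$. Then an $R$-module $M$ is $u$-$S$-finitely presented if and only if $M_S$ is a finitely presented $R_S$-module.
   Context: A multiplicative subset $S$ contains $1$ and is closed under products; $M_S$, $R_S$ denote localizations at $S$. An $R$-module $M$ is $u$-$S$-finitely presented if there are $s\in S$ and an exact sequence $0\to T_1\to F\to M\to T_2\to 0$ with $F$ finitely presented and $sT_1=sT_2=0$. *)

From HB Require Import structures.
From mathcomp Require Import all_boot all_order all_algebra.
Set Implicit Arguments. Unset Strict Implicit. Unset Printing Implicit Defensive.
Import GRing.Theory.
Local Open Scope ring_scope.

Definition multiplicative (R : comPzRingType) (S : R -> Prop) : Prop :=
  S 1 /\ (forall a b, S a -> S b -> S (a * b)).

Definition finite_subset (R : comPzRingType) (S : R -> Prop) : Prop :=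
  exists l : seq R, forall x, S x -> x \in l.

(* A finitely presented A-module: a cokernel of a map A^m -> A^n, i.e.
   there is a linear surjection f : A^n -> N whose kernel is the image of
   A^m under right multiplication by a matrix P (so finitely generated). *)
Definition fin_presented (A : comPzRingType) (N : lmodType A) : Prop :=
  exists (n m : nat) (P : 'M[A]_(m, n)) (f : {linear 'rV[A]_n -> N}),
    (forall y : N, exists u, f u = y) /\
    (forall u : 'rV[A]_n, f u = 0 <-> exists v : 'rV[A]_m, u = v *m P).

(* u-S-finitely presented: there are s in S and an exact sequence
   0 -> T1 -> F -> M -> T2 -> 0 with F finitely presented and s T1 = s T2 = 0;
   here T1 = ker f and T2 = coker f. *)
Definition uS_fin_presented (R : comPzRingType) (S : R -> Prop) (M : lmodType R)
  : Prop :=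
  exists s : R, S s /\
  exists (F : lmodType R) (f : {linear F -> M}), fin_presented F /\
    (forall x : F, f x = 0 -> s *: x = 0) /\
    (forall m : M, exists x : F, f x = s *: m).

Definition is_ring_localization (R : comPzRingType) (S : R -> Prop)
  (RS : comPzRingType) (phi : {rmorphism R -> RS}) : Prop :=
  [/\ (forall s, S s -> exists u, phi s * u = 1),
      (forall y : RS, exists r s, S s /\ phi s * y = phi r) &
      (forall r, phi r = 0 <-> exists t, S t /\ t * r = 0)].

Definition is_module_localization (R : comPzRingType) (S : R -> Prop)
  (RS : comPzRingType) (phi : {rmorphism R -> RS})
  (M : lmodType R) (L : lmodType RS) (g : M -> L) : Prop :=
  [/\ (forall x y, g (x + y) = g x + g y),
      (forall (r : R) x, g (r *: x) = phi r *: g x),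
      (forall y : L, exists m s, S s /\ phi s *: y = g m) &
      (forall m, g m = 0 <-> exists t, S t /\ t *: m = 0)].

(* Since S is finite, a suitable power e of a common multiple of all elements
   of S is an idempotent of S divisible by every element of S.  Inverting S
   then amounts to inverting e: R_S = R/(1-e)R, and the localization map
   M -> M_S is onto with kernel ann(e).  A u-S-presentation F -> M therefore
   becomes an honest presentation after base change to R_S; conversely M_S,
   viewed as an R-module, is finitely presented (add the relations 1 - e), and
   y = g m |-> e m is an R-linear map M_S -> M whose kernel and cokernel are
   killed by e. *)

From Pilot Require Import Defs.
From HB Require Import structures.
From mathcomp Require Import all_boot all_order all_algebra.
From Stdlib Require Import Classical.
Set Implicit Arguments. Unset Strict Implicit. Unset Printing Implicit Defensive.
Import GRing.Theory.
(* GRing.Theory exports a deprecated notation [multiplicative]; re-importing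
   Defs makes [multiplicative] denote the multiplicative-subset predicate. *)
Import Defs.
Local Open Scope ring_scope.

Lemma pigeonhole_nat (T : eqType) (f : nat -> T) (l : seq T) :
  (forall k, f k \in l) -> exists i j, (i < j)%N /\ f i = f j.
Proof.
move=> f_in; have /(uniqPn (f 0))[i [j [ltij]]] : ~~ uniq (mkseq f (size l).+1).
  apply/negP => uniq_f.
  have : (size (mkseq f (size l).+1) <= size l)%N.
    by apply: (uniq_leq_size uniq_f) => _ /mapP[k _ ->].
  by rewrite size_mkseq ltnn.
rewrite size_mkseq => ltj; rewrite !nth_mkseq ?(ltn_trans ltij) // => fij.
by exists i, j.
Qed.

Lemma idempotent_power (R : pzSemiRingType) (s : R) (i j : nat) :
  (i < j)%N -> s ^+ i = s ^+ j -> exists k, (0 < k)%N /\ s ^+ k * s ^+ k = s ^+ k.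
Proof.
move=> ltij sij; set p := (j - i)%N.
have p_gt0 : (0 < p)%N by rewrite subn_gt0.
have ipj : (i + p)%N = j by rewrite subnKC // ltnW.
have shift b : (i <= b)%N -> s ^+ (b + p) = s ^+ b.
  move=> leib; rewrite -(subnKC leib) -addnA (addnC (b - i)%N) addnA.
  by rewrite ipj exprD -sij -exprD.
have period b k : (i <= b)%N -> s ^+ (b + k * p) = s ^+ b.
  move=> leib; elim: k => [|k IH]; first by rewrite addn0.
  by rewrite mulSn addnCA addnC shift ?IH // (leq_trans leib) ?leq_addr.
(* any multiple of the period p that is at least i works *)
have le_i_N : (i <= i.+1 * p)%N by apply: leq_trans (leq_pmulr _ p_gt0).
by exists (i.+1 * p)%N; rewrite muln_gt0 p_gt0 -exprD period.
Qed.

Section FiniteMultiplicative.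
Variables (R : comPzRingType) (S : R -> Prop).
Hypothesis hS : multiplicative S.

Lemma multiplicative_expr k s : S s -> S (s ^+ k).
Proof.
by case: hS => S1 SM Ss; elim: k => [|k IH]; rewrite ?expr0 // exprS; apply: SM.
Qed.

Lemma exists_common_multiple (l : seq R) :
  exists s, S s /\ forall t, S t -> t \in l -> exists u, s = t * u.
Proof.
case: hS => S1 SM; elim: l => [|a l [s [Ss s_mult]]]; first by exists 1.
case: (classic (S a)) => [Sa | nSa].
- exists (s * a); split=> [|t St]; first exact: SM.
  rewrite in_cons => /predU1P[-> | tl]; first by exists s; rewrite mulrC.
  by have [u ->] := s_mult t St tl; exists (u * a); rewrite mulrA.
- exists s; split=> // t St; rewrite in_cons => /predU1P[ta | ].
    by rewrite ta in St.
  exact: s_mult.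
Qed.

Lemma exists_idempotent_multiple : finite_subset S ->
  exists e, [/\ S e, e * e = e & forall t, S t -> exists u, e = t * u].
Proof.
move=> [l Sl]; have [s [Ss s_mult]] := exists_common_multiple l.
have [i [j [ltij sij]]] :=
  pigeonhole_nat (fun k => Sl _ (multiplicative_expr k Ss)).
have [k [k_gt0 idem]] := idempotent_power ltij sij.
exists (s ^+ k); split=> [|//|t St]; first exact: multiplicative_expr.
have [u ->] := s_mult t St (Sl t St).
by exists (u * (t * u) ^+ k.-1); rewrite mulrA -exprS prednK.
Qed.

End FiniteMultiplicative.

Definition restr (R RS : comPzRingType) (phi : {rmorphism R -> RS})
  (L : lmodType RS) : Type := L.

Section Restriction.
Variables (R RS : comPzRingType) (phi : {rmorphism R -> RS}) (L : lmodType RS).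

HB.instance Definition _ := GRing.Zmodule.on (restr phi L).

Definition restr_scale (r : R) (x : restr phi L) : restr phi L :=
  phi r *: (x : L).

Fact restr_scaleA a b x : restr_scale a (restr_scale b x) = restr_scale (a * b) x.
Proof. by rewrite /restr_scale scalerA rmorphM. Qed.
Fact restr_scale1 : left_id 1 restr_scale.
Proof. by move=> x; rewrite /restr_scale rmorph1 scale1r. Qed.
Fact restr_scaleDr : right_distributive restr_scale +%R.
Proof. by move=> a x y; rewrite /restr_scale scalerDr. Qed.
Fact restr_scaleDl x : {morph restr_scale^~ x : a b / a + b}.
Proof. by move=> a b; rewrite /restr_scale rmorphD scalerDl. Qed.

HB.instance Definition _ := GRing.Zmodule_isLmodule.Build R (restr phi L)
  restr_scaleA restr_scale1 restr_scaleDr restr_scaleDl.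

Lemma restr_scaleE r (x : restr phi L) : r *: x = phi r *: (x : L).
Proof. by []. Qed.

Section Semilinear.
Variables (M : lmodType R) (g : M -> L).
Hypothesis g_semilinear : forall a x y, g (a *: x + y) = phi a *: g x + g y.

(* The unused proof argument lets the linear instance below be inferred from
   the term [restr_semilinear g_semilinear] alone. *)
Definition restr_semilinear of
  (forall a x y, g (a *: x + y) = phi a *: g x + g y) : M -> restr phi L := g.

HB.instance Definition _ := GRing.isLinear.Build R M (restr phi L) *:%R
  (restr_semilinear g_semilinear) g_semilinear.

End Semilinear.
End Restriction.

Section LinearCombination.
Variables (A : comPzRingType) (N : lmodType A) (n : nat) (w : 'I_n -> N).

Definition lincomb (u : 'rV[A]_n) : N := \sum_i u 0 i *: w i.

Fact lincomb_linear : linear lincomb.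
Proof.
move=> a u v; rewrite /lincomb scaler_sumr -big_split; apply: eq_bigr => i _.
by rewrite !mxE scalerDl scalerA.
Qed.

HB.instance Definition _ := GRing.isLinear.Build A 'rV[A]_n N *:%R
  lincomb lincomb_linear.

End LinearCombination.

Section IdempotentQuotient.
Variables (R RS : comPzRingType) (phi : {rmorphism R -> RS}) (e : R).
Hypotheses (phi_e : phi e = 1) (phi_surj : forall y, exists r, phi r = y)
  (phi_ann : forall r, phi r = 0 -> e * r = 0).

Lemma map_mx_surj p q (B : 'M[RS]_(p, q)) : exists A, map_mx phi A = B.
Proof.
have phi_surjb y : exists r, phi r == y by have [r <-] := phi_surj y; exists r.
exists (\matrix_(i, j) xchoose (phi_surjb (B i j))).
by apply/matrixP => i j; rewrite !mxE; apply/eqP/(xchooseP (phi_surjb _)).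
Qed.

Lemma map_mx_ann p q (A : 'M[R]_(p, q)) : map_mx phi A = 0 -> e *: A = 0.
Proof.
move=> A0; apply/matrixP => i j; rewrite !mxE; apply: phi_ann.
by have := congr1 (fun B : 'M_(p, q) => B i j) A0; rewrite !mxE.
Qed.

Variable L : lmodType RS.

Lemma restr_scale_idem (x : restr phi L) : e *: x = x.
Proof. by rewrite restr_scaleE phi_e scale1r. Qed.

Lemma fin_presented_base_change (F : lmodType R) (k : {linear F -> restr phi L}) :
  fin_presented F -> (forall y, exists x, k x = y) ->
  (forall x, k x = 0 -> e *: x = 0) -> fin_presented L.
Proof.
move=> [n [m [P [h [h_surj h_ker]]]]] k_surj k_ann.
pose w i : L := k (h (delta_mx 0 i)).
have lincomb_map u : lincomb w (map_mx phi u) = k (h u).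
  rewrite [in RHS](row_sum_delta u) !linear_sum; apply: eq_bigr => i _.
  by rewrite mxE !linearZ.
exists n, m, (map_mx phi P), (GRing.Linear.clone _ _ _ _ (lincomb w) _); split.
  move=> y; have [x <-] := k_surj y; have [u <-] := h_surj x.
  by exists (map_mx phi u); rewrite /= lincomb_map.
move=> u'; split => /=.
  have [u <-] := map_mx_surj u'; rewrite lincomb_map => /k_ann.
  rewrite -!linearZ => /h_ker[v euv]; exists (map_mx phi v).
  by rewrite -map_mxM -euv map_mxZ phi_e scale1r.
case=> v' ->; have [v <-] := map_mx_surj v'.
by rewrite -map_mxM lincomb_map (h_ker _).2 ?linear0 //; exists v.
Qed.

Lemma fin_presented_restr : fin_presented L -> fin_presented (restr phi L).
Proof.
move=> [n [m [P' [f]]]]; have [P <-] := map_mx_surj P'; case=> f_surj f_ker.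
have f_semilinear a u v :
    f (map_mx phi (a *: u + v)) = phi a *: f (map_mx phi u) + f (map_mx phi v).
  by rewrite map_mxD map_mxZ linearP.
pose k := restr_semilinear f_semilinear.
(* lift the relations P and kill the kernel (1 - e)R of phi on each generator *)
exists n, (m + n)%N, (col_mx P (1 - e)%:M), (GRing.Linear.clone _ _ _ _ k _).
split=> [y | u] /=.
  have [u' <-] := f_surj y; have [u <-] := map_mx_surj u'.
  by exists u.
rewrite /k /restr_semilinear /=; split.
  case/f_ker=> v'; have [v <-] := map_mx_surj v'; rewrite -map_mxM => /eqP.
  rewrite -subr_eq0 -map_mxB => /eqP/map_mx_ann e_ann.
  exists (row_mx v (u - v *m P)).
  by rewrite mul_row_col mul_mx_scalar scalerBl scale1r e_ann subr0 addrC subrK.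
case=> v ->; rewrite -[v]hsubmxK mul_row_col mul_mx_scalar; apply/f_ker.
exists (map_mx phi (lsubmx v)).
by rewrite map_mxD map_mxZ rmorphB rmorph1 phi_e subrr scale0r addr0 map_mxM.
Qed.

Variables (M : lmodType R) (g : {linear M -> restr phi L}).
Hypotheses (g_surj : forall y, exists m, g m = y)
  (g_ann : forall m, g m = 0 -> e *: m = 0).

Fact g_surjb y : exists m, g m == y.
Proof. by have [m <-] := g_surj y; exists m. Qed.

Definition retraction (y : restr phi L) : M := e *: xchoose (g_surjb y).

Lemma retractionE m : retraction (g m) = e *: m.
Proof.
apply/eqP; rewrite -subr_eq0 -scalerBr; apply/eqP/g_ann.
by rewrite linearB (eqP (xchooseP (g_surjb _))) subrr.
Qed.

Fact retraction_linear : linear retraction.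
Proof.
move=> a y z; have [my <-] := g_surj y; have [mz <-] := g_surj z.
by rewrite -linearP !retractionE scalerDr !scalerA mulrC.
Qed.

HB.instance Definition _ := GRing.isLinear.Build R (restr phi L) M *:%R
  retraction retraction_linear.

Variable S : R -> Prop.
Hypotheses (e_idem : e * e = e) (Se : S e)
  (e_mult : forall t, S t -> exists u, e = t * u).

Lemma fin_presented_of_uS_fin_presented : uS_fin_presented S M -> fin_presented L.
Proof.
move=> [s [Ss [F [f [fpF [f_ker f_coker]]]]]]; have [u e_su] := e_mult Ss.
pose k := GRing.Linear.clone _ _ _ _ (g \o f) _.
apply: (fin_presented_base_change (k := k)) => //=.
  move=> y; have [m <-] := g_surj y; have [x fx] := f_coker (u *: m).
  by exists x; rewrite fx scalerA -e_su linearZZ restr_scale_idem.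
move=> x /g_ann; rewrite -linearZ => /f_ker s_ex.
by rewrite -e_idem -scalerA {1}e_su mulrC -scalerA s_ex scaler0.
Qed.

Lemma uS_fin_presented_of_fin_presented : fin_presented L -> uS_fin_presented S M.
Proof.
move=> fpL; exists e; split=> //.
exists (restr phi L), (GRing.Linear.clone _ _ _ _ retraction _).
split; first exact: fin_presented_restr.
split=> [y | m] /=; last by exists (g m); rewrite retractionE.
have [m <-] := g_surj y; rewrite retractionE => em0.
by rewrite -linearZZ em0 linear0.
Qed.

End IdempotentQuotient.

Section FiniteLocalization.
Variables (R : comPzRingType) (S : R -> Prop) (RS : comPzRingType).
Variables (phi : {rmorphism R -> RS}) (e : R).
Hypotheses (hRS : is_ring_localization S phi) (e_idem : e * e = e) (Se : S e)
  (e_mult : forall t, S t -> exists u, e = t * u).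

Lemma localization_idem_eq1 : phi e = 1.
Proof.
case: hRS => unitS _ _; have [u eu1] := unitS e Se.
by rewrite -[LHS]mulr1 -eu1 mulrA -rmorphM e_idem.
Qed.

Lemma localization_surj y : exists r, phi r = y.
Proof.
case: hRS => _ locRS _; have [r [s [Ss sy]]] := locRS y.
have [u e_su] := e_mult Ss.
exists (u * r); rewrite rmorphM -sy mulrA -rmorphM (mulrC u) -e_su.
by rewrite localization_idem_eq1 mul1r.
Qed.

Lemma localization_ann r : phi r = 0 -> e * r = 0.
Proof.
case: hRS => _ _ kerRS /kerRS[t [St tr]]; have [u ->] := e_mult St.
by rewrite mulrAC tr mul0r.
Qed.

Variables (M : lmodType R) (L : lmodType RS) (g : M -> L).
Hypothesis hL : is_module_localization S phi g.

Lemma module_localization_semilinear a x y : g (a *: x + y) = phi a *: g x + g y.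
Proof. by case: hL => gD gZ _ _; rewrite gD gZ. Qed.

Lemma module_localization_surj y : exists m, g m = y.
Proof.
case: hL => _ gZ locL _; have [m [s [Ss sy]]] := locL y.
have [u e_su] := e_mult Ss.
exists (u *: m); rewrite gZ -sy scalerA -rmorphM (mulrC u) -e_su.
by rewrite localization_idem_eq1 scale1r.
Qed.

Lemma module_localization_ann m : g m = 0 -> e *: m = 0.
Proof.
case: hL => _ _ _ kerL /kerL[t [St tm]]; have [u ->] := e_mult St.
by rewrite mulrC -scalerA tm scaler0.
Qed.

End FiniteLocalization.

Theorem proposition2p4 (R : comPzRingType) (S : R -> Prop)
  (hS : multiplicative S) (hfin : finite_subset S)
  (M : lmodType R)
  (RS : comPzRingType) (phi : {rmorphism R -> RS})
  (hRS : is_ring_localization S phi)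
  (L : lmodType RS) (g : M -> L) (hL : is_module_localization S phi g) :
  uS_fin_presented S M <-> fin_presented L.
Proof.
have [e [Se e_idem e_mult]] := exists_idempotent_multiple hS hfin.
have phi_e := localization_idem_eq1 hRS e_idem Se.
have phi_surj := localization_surj hRS e_idem Se e_mult.
have phi_ann := localization_ann hRS e_mult.
pose gl := GRing.Linear.clone _ _ _ _
  (restr_semilinear (module_localization_semilinear hL)) _.
have g_surj : forall y, exists m, gl m = y :=
  module_localization_surj hRS e_idem Se e_mult hL.
have g_ann : forall m, gl m = 0 -> e *: m = 0 :=
  module_localization_ann e_mult hL.
split; first exact: (fin_presented_of_uS_fin_presented
  phi_e phi_surj g_surj g_ann e_idem e_mult).
exact: (uS_fin_presented_of_fin_presented phi_e phi_surj phi_ann g_surj g_ann Se).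
Qed.
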